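(* There is no assignment rule (defined for profiles of every number $n$ of agents over alternatives $\{A,B\}$) that is both stable and strategyproof over the domain of all minimally-interleaving profiles.
   Context: Agents $V=\{v_1,\dots,v_n\}$; two alternatives $A,B$. Each agent $v_i$ has a strict total order $\succ_i$ on $\{A,B\}\times\{1,\dots,n\}$, where $(S,j)$ means being in the community adopting $S$ of size $j$; it is monotonic if $(S,j)\succ_i(S,k)$ whenever $k<j$. A preference is non-interleaving if it is monotonic and $(A,1)\succ(B,n)$ or $(B,1)\succ(A,n)$. A preference is minimally-interleaving if it is monotonic and either $(A,2)\succ(B,n)\succ(A,1)\succ(B,n-1)$ or $(B,2)\succ(A,n)\succ(B,1)\succ(A,n-1)$. A profile is minimally-interleaving if each of its orders is non-interleaving or minimally-interleaving. An assignment is a map $f:V\to\{A,B\}$; $v_i$ prefers $f$ to $g$ if $(f(v_i),|f^{-1}(f(v_i))|)\succ_i(g(v_i),|g^{-1}(g(v_i))|)$. An assignment $f$ is stable if there is no assignment $f'\neq f$ such that every agent $v_i$ with $f'(v_i)\neq f(v_i)$ prefers $f'$ to $f$. An assignment rule $R$ maps profiles to assignments; it is stable if $R(V)$ is stable whenever $V$ admits a stable assignment. $R$ is strategyproof over a domain $D$ if for every $V\in D$ with $f=R(V)$ there is no agent $v_i$ and monotonic order $\succ_i'$ such that, with $V'$ obtained by replacing $\succ_i$ by $\succ_i'$ and $f'=R(V')$, agent $v_i$ prefers $f'$ to $f$ according to her true order. *)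

From mathcomp Require Import all_boot.
Set Implicit Arguments. Unset Strict Implicit. Unset Printing Implicit Defensive.

Definition altA : bool := true.
Definition altB : bool := false.

(* Agents are 'I_n.  An outcome (S, k) with k : 'I_n stands for the paper's
   (S, k+1): being in the community adopting S of size k+1 (sizes 1..n). *)
Definition outcome (n : nat) := (bool * 'I_n)%type.

Definition strict_total_order n (r : rel (outcome n)) : Prop :=
  irreflexive r /\ transitive r /\ (forall x y, x != y -> r x y || r y x).

(* The paper's (S, j) >_r (T, k), with j, k paper-style sizes in 1..n. *)
Definition prefP n (r : rel (outcome n)) (S : bool) (j : nat) (T : bool) (k : nat)
  : Prop :=
  exists a b : 'I_n, a.+1 = j /\ b.+1 = k /\ r (S, a) (T, b).

Definition monotonic n (r : rel (outcome n)) : Prop :=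
  forall (S : bool) (j k : 'I_n), k < j -> r (S, j) (S, k).

Definition non_interleaving n (r : rel (outcome n)) : Prop :=
  monotonic r /\ (prefP r altA 1 altB n \/ prefP r altB 1 altA n).

Definition minimally_interleaving n (r : rel (outcome n)) : Prop :=
  monotonic r /\
  ((prefP r altA 2 altB n /\ prefP r altB n altA 1 /\ prefP r altA 1 altB n.-1)
   \/
   (prefP r altB 2 altA n /\ prefP r altA n altB 1 /\ prefP r altB 1 altA n.-1)).

Definition profile (n : nat) := 'I_n -> rel (outcome n).

Definition is_profile n (V : profile n) : Prop :=
  forall i, strict_total_order (V i).

Definition min_interleaving_profile n (V : profile n) : Prop :=
  is_profile V /\
  forall i, non_interleaving (V i) \/ minimally_interleaving (V i).

Definition assignment (n : nat) := {ffun 'I_n -> bool}.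

(* size of the community of agent i under f, minus one (as an ordinal);
   the default [i] of insubd is never used since #|...| is in 1..n. *)
Definition csize n (f : assignment n) (i : 'I_n) : 'I_n :=
  insubd i (#|[set j | f j == f i]|.-1).

Definition outc n (f : assignment n) (i : 'I_n) : outcome n := (f i, csize f i).

Definition prefers n (r : rel (outcome n)) (f g : assignment n) (i : 'I_n) : bool :=
  r (outc f i) (outc g i).

Definition stable_assignment n (V : profile n) (f : assignment n) : Prop :=
  ~ exists g : assignment n,
      g != f /\ forall i, g i != f i -> prefers (V i) g f i.

Definition admits_stable n (V : profile n) : Prop :=
  exists f, stable_assignment V f.

Definition rule := forall n : nat, profile n -> assignment n.

Definition rule_stable (R : rule) : Prop :=
  forall n (V : profile n), is_profile V -> admits_stable V ->
    stable_assignment V (R n V).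

Definition replace n (V : profile n) (i : 'I_n) (r' : rel (outcome n)) : profile n :=
  fun j => if j == i then r' else V j.

Definition strategyproof_MI (R : rule) : Prop :=
  forall n (V : profile n), min_interleaving_profile V ->
    forall (i : 'I_n) (r' : rel (outcome n)),
      strict_total_order r' -> monotonic r' ->
      ~~ prefers (V i) (R n (replace V i r')) (R n V) i.

From mathcomp Require Import all_boot zify.

Set Implicit Arguments. Unset Strict Implicit. Unset Printing Implicit Defensive.

(* Two agents suffice.  Agent 0 ranks (A,2) > (B,2) > (A,1) > (B,1) and agent 1
   ranks the mirror image; both orders are minimally interleaving, and the
   stable assignments are exactly the two unanimous ones.  Whichever of them a
   stable rule picks, the agent favouring the other alternative can report the
   order ranking her favourite first at every size.  Then the only stable
   assignment is unanimous on her favourite, which she truly prefers. *)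

Lemma ord2P (i : 'I_2) : i = ord0 \/ i = ord_max.
Proof. by case: i => [[|[|m]] Hi]; [left | right | by []]; apply: val_inj. Qed.

Lemma card_ord2 (P : pred 'I_2) : #|P| = P ord0 + P ord_max.
Proof.
rewrite -sum1_card big_mkcond big_ord_recr big_ord1 /=.
have -> : widen_ord (leqnSn 1) ord0 = ord0 :> 'I_2 by apply: val_inj.
by rewrite !unfold_in; case: (P ord0); case: (P ord_max).
Qed.

Definition assign2 (a b : bool) : assignment 2 :=
  [ffun i : 'I_2 => if i == ord0 then a else b].

Lemma assign2_0 a b : assign2 a b ord0 = a. Proof. by rewrite ffunE. Qed.
Lemma assign2_1 a b : assign2 a b ord_max = b. Proof. by rewrite ffunE. Qed.

Lemma assign2_eta (f : assignment 2) : f = assign2 (f ord0) (f ord_max).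
Proof. by apply/ffunP => i; rewrite ffunE; case: (ord2P i) => ->. Qed.

Lemma assign2_eq a b c d : (assign2 a b == assign2 c d) = (a == c) && (b == d).
Proof.
apply/eqP/andP => [E | [/eqP-> /eqP->] //].
have := congr1 (fun f : assignment 2 => (f ord0, f ord_max)) E.
by rewrite /= !assign2_0 !assign2_1 => -[-> ->].
Qed.

Lemma csize_assign2 a b i : val (csize (assign2 a b) i) = (a == b).
Proof.
rewrite val_insubd cardsE card_ord2 assign2_0 assign2_1.
by case: (ord2P i) => ->; rewrite ?assign2_0 ?assign2_1; case: a; case: b.
Qed.

(* Higher scores are preferred; the size argument is the 0-based size used in
   [outcome]. *)
Definition score_rel (n : nat) (h : bool -> nat -> nat) : rel (outcome n) :=
  fun x y => h y.1 y.2 < h x.1 x.2.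

Lemma score_rel_total n (h : bool -> nat -> nat) :
  injective (fun x : outcome n => h x.1 x.2) ->
  strict_total_order (n := n) (score_rel h).
Proof.
move=> h_inj; split; [|split].
- by move=> x; rewrite /score_rel ltnn.
- by move=> y x z xy yz; apply: ltn_trans xy.
- move=> x y; apply: contraR; rewrite /score_rel negb_or -!leqNgt => /andP[yx xy].
  by apply/eqP/h_inj/eqP; rewrite eqn_leq xy yx.
Qed.

Lemma prefers_assign2 h a b c d i :
  prefers (score_rel h) (assign2 c d) (assign2 a b) i =
  (h (assign2 a b i) (a == b) < h (assign2 c d i) (c == d)).
Proof. by rewrite /prefers /outc /score_rel /= !csize_assign2. Qed.

Definition blocks2 (h0 h1 : bool -> nat -> nat) (a b c d : bool) : bool :=
  [&& (c != a) || (d != b),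
      (c != a) ==> (h0 a (a == b) < h0 c (c == d)) &
      (d != b) ==> (h1 b (a == b) < h1 d (c == d))].

Section TwoAgents.

Variables (V : profile 2) (h0 h1 : bool -> nat -> nat).
Hypotheses (V0 : V ord0 = score_rel h0) (V1 : V ord_max = score_rel h1).

Lemma blocking2P a b :
  (exists g, g != assign2 a b /\ forall i, g i != assign2 a b i ->
     prefers (V i) g (assign2 a b) i) <->
  exists c d, blocks2 h0 h1 a b c d.
Proof.
split=> [[g []] | [c [d /and3P[moved /implyP dev0 /implyP dev1]]]].
  rewrite [g]assign2_eta; move: (g ord0) (g ord_max) => c d.
  rewrite assign2_eq negb_and => moved dev; exists c, d.
  have := dev ord0; have := dev ord_max.
  rewrite V0 V1 !prefers_assign2 !assign2_0 !assign2_1 => /implyP dev1 /implyP dev0.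
  by rewrite /blocks2 moved dev0 dev1.
exists (assign2 c d); split; first by rewrite assign2_eq negb_and.
move=> i; case: (ord2P i) => ->; rewrite ?V0 ?V1 prefers_assign2 ?assign2_0 ?assign2_1.
  exact: dev0.
exact: dev1.
Qed.

Lemma stable2P a b :
  stable_assignment V (assign2 a b) <->
  ~~ [|| blocks2 h0 h1 a b false false, blocks2 h0 h1 a b false true,
         blocks2 h0 h1 a b true false | blocks2 h0 h1 a b true true].
Proof.
rewrite /stable_assignment blocking2P; split.
  move=> nblock; apply/negP => /or4P[] blk;
  by case: nblock; do 2 eexists; exact: blk.
by move=> /negP nblock [[] [[] blk]]; apply: nblock; rewrite blk ?orbT.
Qed.

End TwoAgents.

Definition interleaving_score (fav S : bool) (k : nat) : nat := k.*2 + (S == fav).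

Definition lexicographic_score (n : nat) (fav S : bool) (k : nat) : nat :=
  k + n * (S == fav).

Lemma interleaving_score_total n fav :
  strict_total_order (n := n) (score_rel (interleaving_score fav)).
Proof.
apply: score_rel_total => -[S j] [T k] /=; rewrite /interleaving_score => E.
have [-> /val_inj ->] : S = T /\ val j = k by case: S T fav E => [] [] [] /=; lia.
by [].
Qed.

Lemma lexicographic_score_total n fav :
  strict_total_order (n := n) (score_rel (lexicographic_score n fav)).
Proof.
apply: score_rel_total => -[S j] [T k] /=; rewrite /lexicographic_score => E.
have [-> /val_inj ->] : S = T /\ val j = k.
  by move: (ltn_ord j) (ltn_ord k) E; case: S T fav => [] [] [] /=; lia.
by [].
Qed.

Lemma interleaving_score_monotonic n fav :
  monotonic (n := n) (score_rel (interleaving_score fav)).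
Proof. by move=> S j k; rewrite /score_rel /interleaving_score /=; lia. Qed.

Lemma lexicographic_score_monotonic n fav :
  monotonic (n := n) (score_rel (lexicographic_score n fav)).
Proof. by move=> S j k; rewrite /score_rel /lexicographic_score /=; lia. Qed.

Lemma interleaving_score_min_interleaving fav :
  minimally_interleaving (n := 2) (score_rel (interleaving_score fav)).
Proof.
split; first exact: interleaving_score_monotonic.
by case: fav; [left | right];
  (split; [exists ord_max, ord_max | split; [exists ord_max, ord0 | exists ord0, ord0]]).
Qed.

Definition truthful : profile 2 :=
  fun i => score_rel (interleaving_score (i == ord0)).

Definition dissenter (a : bool) : 'I_2 := if a then ord_max else ord0.

Definition misreport (a : bool) : profile 2 :=
  replace truthful (dissenter a) (score_rel (lexicographic_score 2 (~~ a))).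

Lemma truthful_min_interleaving : min_interleaving_profile truthful.
Proof.
split=> i; first exact: interleaving_score_total.
by right; apply: interleaving_score_min_interleaving.
Qed.

Lemma misreport_profile a : is_profile (misreport a).
Proof.
move=> i; rewrite /misreport /replace; case: eqP => _.
  exact: lexicographic_score_total.
exact: interleaving_score_total.
Qed.

Lemma stable_truthful a b : stable_assignment truthful (assign2 a b) <-> a = b.
Proof. by rewrite stable2P //; case: a; case: b; split. Qed.

Lemma stable_misreport a c d :
  stable_assignment (misreport a) (assign2 c d) <-> c = ~~ a /\ d = ~~ a.
Proof. by case: a; rewrite stable2P //; case: c; case: d; split=> // -[]. Qed.

Lemma dissenter_gains a :
  prefers (truthful (dissenter a)) (assign2 (~~ a) (~~ a)) (assign2 a a) (dissenter a).
Proof. by case: a; rewrite prefers_assign2 ?assign2_0 ?assign2_1. Qed.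

Theorem mainTheorem8 :
  ~ exists R : rule, rule_stable R /\ strategyproof_MI R.
Proof.
move=> [R [R_stable R_sp]].
have [a Ra] : exists a, R 2 truthful = assign2 a a.
  have : stable_assignment truthful (R 2 truthful).
    apply: R_stable; first exact: truthful_min_interleaving.1.
    by exists (assign2 true true); apply/stable_truthful.
  by rewrite [R 2 _]assign2_eta stable_truthful => <-; exists (R 2 truthful ord0).
have Rmis : R 2 (misreport a) = assign2 (~~ a) (~~ a).
  have : stable_assignment (misreport a) (R 2 (misreport a)).
    apply: R_stable; first exact: misreport_profile.
    by exists (assign2 (~~ a) (~~ a)); apply/stable_misreport.
  by rewrite [R 2 _]assign2_eta stable_misreport => -[-> ->].
have := R_sp 2 truthful truthful_min_interleaving (dissenter a) _
  (@lexicographic_score_total 2 (~~ a)) (@lexicographic_score_monotonic 2 (~~ a)).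
by rewrite -/(misreport a) Rmis Ra dissenter_gains.
Qed.
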